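(* In the transfer model and with the freeze algorithm $\mathrm{CalcFreeze}$ described in the context, suppose the transaction graph $G$ is acyclic and that no burn transactions occur between the disputed transaction $t_0$ and the freeze time. Then when the algorithm terminates, every edge $t=(a\to b)$ of $G$ satisfies $$ \mathrm{ob}(b,t)\le \mathrm{obsum}(a,t). $$ That is, the obligation passed to $b$ because of $t$ does not exceed the obligations passed to $a$ through transactions into $a$ that occurred before $t$.
   Context: Transfer model. There is a finite set of addresses, each holding a nonnegative token balance. A transaction is a transfer $t=(a\to b)$ of value $\mathrm{val}(t)\ge 0$ from address $a$ to address $b$; it decreases the balance of $a$ by $\mathrm{val}(t)$ and increases the balance of $b$ by $\mathrm{val}(t)$. Transactions are totally ordered in time, and each transaction is valid: the sender's balance never becomes negative. There are no burns, i.e. no operation removes tokens from an address other than a transfer. The disputed transaction is $t_0=(v\to a_0)$ with $s=\mathrm{val}(t_0)$. The freeze happens at a time after $t_0$ and after all transactions considered. For an address $a$, $\mathrm{Bal}(a)$ denotes its balance at the freeze time; no amounts are frozen before this freeze. Transaction graph $G$. Consider the transactions strictly after $t_0$ and before the freeze. $G$ is the directed multigraph whose edges are those transactions $(b\to c)$ for which there is a directed path of such transactions from $a_0$ to $b$ ($b=a_0$ allowed). The vertices are $a_0$ and all endpoints of these edges. Each edge keeps its time and its value $\mathrm{val}$. Algorithm $\mathrm{CalcFreeze}$ (on acyclic $G$): - Let $L$ be a topological order of the vertices of $G$, i.e. for every edge $a\to b$, $a$ precedes $b$. - Initialize $\mathrm{oblig}(a)=0$ for all $a\neq a_0$ and $\mathrm{oblig}(a_0)=s$.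 - For each $a$ in the order $L$: - Set $\tau=\mathrm{oblig}(a)$, $\mathrm{toFreeze}(a)=\min(\tau,\mathrm{Bal}(a))$ and $\tau'=\tau-\mathrm{toFreeze}(a)$. - If $\tau'\le 0$, proceed to the next vertex. - Otherwise, iterate over the outgoing edges $t=(a\to b)$ of $a$ in $G$ in reverse chronological order (most recent first). For each such edge set $\mathrm{ob}(b,t)=\min(\tau',\mathrm{val}(t))$, add $\mathrm{ob}(b,t)$ to $\mathrm{oblig}(b)$, and subtract $\mathrm{ob}(b,t)$ from $\tau'$. Stop iterating over the edges of $a$ as soon as $\tau'\le 0$. - Edges never processed have $\mathrm{ob}(b,t)=0$. Definition of $\mathrm{obsum}$. Set $\mathrm{ob}(a_0,t_0)=s$. For an edge $t=(a\to b)$ of $G$, $\mathrm{obsum}(a,t)$ is the sum of $\mathrm{ob}(a,t')$ over all transactions $t'$ into $a$ that occurred before $t$, where $t'$ ranges over the edges of $G$ with destination $a$ together with $t_0$ if $a=a_0$. *)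

From mathcomp Require Import all_boot all_order all_algebra.
Set Implicit Arguments. Unset Strict Implicit. Unset Printing Implicit Defensive.
Import Order.TTheory GRing.Theory Num.Theory.
Local Open Scope ring_scope.

(* A finite transaction history: transactions are indexed by time 0..n-1
   (index order = chronological order).  The freeze happens at time n, i.e. after
   all transactions of the history.  Tokens only move through transfers
   (no burns, no mints): balances are computed from transfers only. *)
Record history (A : finType) (R : realFieldType) := History {
  n_tx : nat;
  src : nat -> A;
  dst : nat -> A;
  amt : nat -> R;
  init : A -> R }.

Section Model.
Variables (A : finType) (R : realFieldType) (h : history A R).

Local Notation n := (n_tx h).
Local Notation src := (src h).
Local Notation dst := (dst h).
Local Notation amt := (amt h).

Definition apply_tx (b : A -> R) (i : nat) : A -> R :=
  fun x => b x - (if x == src i then amt i else 0)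
               + (if x == dst i then amt i else 0).

(* balances just before transaction k (i.e. after transactions 0..k-1) *)
Definition bal_at (k : nat) : A -> R := foldl apply_tx (init h) (iota 0 k).

Definition Bal : A -> R := bal_at n.

Definition valid_history : Prop :=
  [/\ forall i, (i < n)%N -> 0 <= amt i,
      forall x, 0 <= init h x
    & forall i, (i < n)%N -> amt i <= bal_at i (src i)].

Variable i0 : nat.

Definition a0 : A := dst i0.
Definition s : R := amt i0.

Definition trel : rel A :=
  fun x y => has (fun i => [&& (i0 < i)%N, src i == x & dst i == y]) (iota 0 n).

Definition inG (i : nat) : bool :=
  [&& (i0 < i)%N, (i < n)%N & connect trel a0 (src i)].

Definition Grel : rel A :=
  fun x y => has (fun i => [&& inG i, src i == x & dst i == y]) (iota 0 n).

Definition isVertex (x : A) : bool :=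
  (x == a0) || has (fun i => inG i && ((src i == x) || (dst i == x))) (iota 0 n).

Definition G_acyclic : Prop :=
  forall i, inG i -> ~~ connect Grel (dst i) (src i).

Definition topo_order (L : seq A) : Prop :=
  [/\ uniq L,
      forall x, (x \in L) = isVertex x
    & forall i, inG i -> (index (src i) L < index (dst i) L)%N].

(* state: (oblig, ob) where ob is indexed by the edge (transaction index) *)

Definition out_edges (a : A) : seq nat :=
  rev [seq i <- iota 0 n | inG i && (src i == a)].

Definition step_edge (p : (A -> R) * (nat -> R) * R) (t : nat)
  : (A -> R) * (nat -> R) * R :=
  let: (obl, o, tau) := p in
  if tau <= 0 then p (* stop iterating *)
  else
    let x := Num.min tau (amt t) in
    ((fun y => if y == dst t then obl y + x else obl y),
     (fun j => if j == t then x else o j),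
     tau - x).

Definition process (st : (A -> R) * (nat -> R)) (a : A) : (A -> R) * (nat -> R) :=
  let: (obl, o) := st in
  let tau := obl a in
  let toFreeze := Num.min tau (Bal a) in
  let tau' := tau - toFreeze in
  if tau' <= 0 then st
  else let: (obl', o', _) := foldl step_edge (obl, o, tau') (out_edges a) in
       (obl', o').

Definition calc_freeze (L : seq A) : (A -> R) * (nat -> R) :=
  foldl process ((fun y => if y == a0 then s else 0), (fun _ => 0)) L.

(* final obligations ob(b,t) of the edges (0 for unprocessed edges) *)
Definition ob_final (L : seq A) : nat -> R := (calc_freeze L).2.

(* obsum(a,t) for an edge t = (a -> b): the obligations on the edges of G
   into a that occurred before t, plus ob(a0,t0) = s when a = a0 *)
Definition obsum (o : nat -> R) (t : nat) : R :=
  (if src t == a0 then s else 0)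
  + \sum_(j <- iota 0 n | [&& inG j, dst j == src t & (j < t)%N]) o j.

End Model.

From mathcomp Require Import all_boot all_order all_algebra.
From mathcomp Require Import lra.
Set Implicit Arguments. Unset Strict Implicit. Unset Printing Implicit Defensive.
Import Order.TTheory GRing.Theory Num.Theory.
Local Open Scope ring_scope.

(* Let t = (a -> b) be an edge of G.  Every edge into a comes
   from a vertex placed before a in the topological order, so when CalcFreeze
   reaches a the obligations on these edges are final, and by conservation
   oblig(a) = [a = a0] s + (sum of ob over the edges into a).  The edges into
   a at or after t carry at most the tokens that a received after t, and by
   conservation of tokens these are at most Bal(a) plus what a sent after t,
   i.e. Bal(a) plus the values of the outgoing edges of a that are processed
   before t (most recent first).  Since a first keeps min(oblig(a), Bal(a))
   and every later outgoing edge absorbs up to its value, the obligation left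
   for t is at most obsum(a, t).  Acyclicity of G
   enters only through the existence of the topological order L, and
   i0 < n follows from t being an edge of G. *)

Section CalcFreezeObligations.
Variables (A : finType) (R : realFieldType) (h : history A R) (i0 : nat).
Hypothesis Hvalid : valid_history h.

Local Notation n := (n_tx h).
Local Notation amt := (amt h).
Local Notation src := (src h).
Local Notation dst := (dst h).
Local Notation Bal := (Bal h).
Local Notation step := (step_edge h).
Local Notation inG := (inG h i0).
Local Notation process := (process h i0).
Local Notation out_edges := (out_edges h i0).
Local Notation a0 := (a0 h i0).
Local Notation s := (s h i0).

Local Notation after t := (iota t.+1 (n - t.+1)).

Lemma amt_ge0 j : (j < n)%N -> 0 <= amt j.
Proof. by case: Hvalid => H _ _; apply: H. Qed.

Lemma inG_lt j : inG j -> (j < n)%N.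
Proof. by case/and3P. Qed.

Lemma iota_around t : (t < n)%N -> iota 0 n = iota 0 t ++ t :: after t.
Proof. by move=> tn; rewrite -{1}(subnKC tn) iotaD -addn1 iotaD -catA. Qed.

Lemma sum_around (P : pred nat) (F : nat -> R) t : (t < n)%N ->
  \sum_(j <- iota 0 n | P j) F j =
  \sum_(j <- iota 0 n | P j && (j < t)%N) F j
  + (if P t then F t else 0) + \sum_(j <- after t | P j) F j.
Proof.
move=> tn; rewrite (iota_around tn) !big_cat !big_cons /= ltnn andbF.
have before : \sum_(j <- iota 0 t | P j && (j < t)%N) F j =
                \sum_(j <- iota 0 t | P j) F j.
  rewrite big_seq_cond [RHS]big_seq_cond; apply: eq_bigl => j.
  by rewrite mem_iota /= add0n; case: (j < t)%N; rewrite ?andbT ?andbF.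
have later : \sum_(j <- after t | P j && (j < t)%N) F j = 0.
  apply: big1_seq => j /andP[/andP[_ jt]]; rewrite mem_iota => /andP[tj _].
  by move: (ltn_trans jt tj); rewrite ltnn.
rewrite before later addr0 -addrA; congr (_ + _).
by case: (P t); rewrite ?add0r.
Qed.

Lemma bal_atE k x : bal_at h k x =
  init h x + \sum_(j <- iota 0 k | dst j == x) amt j
           - \sum_(j <- iota 0 k | src j == x) amt j.
Proof.
elim: k => [|k IH]; first by rewrite /bal_at /= !big_nil addr0 subr0.
rewrite /bal_at -addn1 iotaD foldl_cat -/(bal_at h k) /= /apply_tx IH.
rewrite !big_cat /= !big_cons !big_nil (eq_sym x (src k)) (eq_sym x (dst k)).
by case: (src k == x); case: (dst k == x); rewrite /=; lra.
Qed.

Lemma bal_at_ge0 k x : (k <= n)%N -> 0 <= bal_at h k x.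
Proof.
case: Hvalid => amt0 init0 spend.
elim: k => [|k IH] kn; first by rewrite /bal_at /=.
have := IH (ltnW kn); have := amt0 k kn; have := spend k kn.
rewrite /bal_at -addn1 iotaD foldl_cat -/(bal_at h k) /= /apply_tx.
by case: eqP => [->|_]; case: eqP => [->|_]; lra.
Qed.

Lemma late_inflow_le k x : (k <= n)%N ->
  \sum_(j <- iota k (n - k) | dst j == x) amt j
  <= Bal x + \sum_(j <- iota k (n - k) | src j == x) amt j.
Proof.
move=> kn; have := bal_at_ge0 x kn.
have split : iota 0 n = iota 0 k ++ iota k (n - k) by rewrite -{1}(subnKC kn) iotaD.
by rewrite /Bal !bal_atE split !big_cat /=; lra.
Qed.

Lemma fold_step_stopped p l : p.2 <= 0 -> foldl step p l = p.
Proof.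
case: p => [[obl o] tau] /= stop.
by elim: l => //= x l IH; rewrite stop.
Qed.

Lemma fold_step_ob_notin p l j : j \notin l -> (foldl step p l).1.2 j = p.1.2 j.
Proof.
elim: l p => [|x l IH] [[obl o] tau] //=.
rewrite in_cons negb_or => /andP[jx jl]; rewrite IH //=.
by case: ifP => //= _; rewrite (negbTE jx).
Qed.

Definition ob_range (o : nat -> R) : Prop :=
  forall j, 0 <= o j <= Num.max 0 (amt j).

Lemma fold_step_range p l : (forall j, j \in l -> 0 <= amt j) ->
  ob_range p.1.2 -> ob_range (foldl step p l).1.2.
Proof.
elim: l p => [|x l IH] [[obl o] tau] //= amt0 range.
apply: IH => [j jl|]; first by apply: amt0; rewrite in_cons jl orbT.
case: ifP => //= stop j; case: eqP => [->|_]; last exact: range.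
have ax : 0 <= amt x by apply: amt0; rewrite mem_head.
by rewrite (max_idPr ax) le_min ax ge_min lexx orbT andbT ltW // ltNge stop.
Qed.

Lemma fold_step_rem_le p l : (forall j, j \in l -> 0 <= amt j) ->
  Num.max 0 (foldl step p l).2 <= Num.max 0 (p.2 - \sum_(j <- l) amt j).
Proof.
elim: l p => [|x l IH] [[obl o] tau] amt0; first by rewrite big_nil subr0.
have amt0l j : j \in l -> 0 <= amt j by move=> jl; apply: amt0; rewrite in_cons jl orbT.
have suml : 0 <= \sum_(j <- l) amt j by rewrite big_seq; apply: sumr_ge0.
rewrite big_cons /=; case: (lerP tau 0) => [stop|pos].
  by rewrite fold_step_stopped //= (max_idPl stop) le_max lexx.
apply: le_trans (IH _ amt0l) _ => /=.
case: (lerP tau (amt x)) => cmp; last by rewrite opprD addrA.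
have -> : Num.max 0 (tau - tau - \sum_(j <- l) amt j) = 0 by apply/max_idPl; lra.
by rewrite le_max lexx.
Qed.

Lemma step_ob_le p t : p.1.2 t = 0 -> (step p t).1.2 t <= Num.max 0 p.2.
Proof.
case: p => [[obl o] tau] /= ot; case: ifP => _ /=; rewrite ?eqxx ?ot le_max ?lexx //.
by rewrite !ge_min lexx !orbT.
Qed.

Definition conserved (st : (A -> R) * (nat -> R)) : Prop :=
  forall v, st.1 v = (if v == a0 then s else 0)
                     + \sum_(j <- iota 0 n | inG j && (dst j == v)) st.2 j.

Lemma step_conserved p x : inG x -> p.1.2 x = 0 -> conserved p.1 ->
  conserved (step p x).1.
Proof.
case: p => [[obl o] tau] Gx; rewrite /conserved /= => ox cons.
case: ifP => //= _ v.
set m := Num.min tau (amt x).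
have pick : \sum_(j <- iota 0 n | inG j && (dst j == v)) (if j == x then m else 0)
            = if dst x == v then m else 0.
  rewrite big_mkcond (bigD1_seq x) ?iota_uniq ?mem_iota ?inG_lt //= eqxx Gx.
  by rewrite big1 ?addr0 // => j /negbTE ->; case: ifP.
have split : \sum_(j <- iota 0 n | inG j && (dst j == v)) (if j == x then m else o j)
    = \sum_(j <- iota 0 n | inG j && (dst j == v)) o j + (if dst x == v then m else 0).
  rewrite -pick -big_split; apply: eq_bigr => j _ /=.
  by case: eqP => [->|]; rewrite ?ox ?add0r ?addr0.
rewrite split cons (eq_sym (dst x)).
by case: (v == dst x); rewrite ?addr0 ?addrA.
Qed.

Lemma fold_step_conserved p l : uniq l ->
  (forall j, j \in l -> inG j /\ p.1.2 j = 0) -> conserved p.1 ->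
  conserved (foldl step p l).1.
Proof.
elim: l p => [|x l IH] p //= /andP[xl ul] fresh cons.
have [Gx ox] := fresh x (mem_head _ _).
apply: IH => // [j jl|]; last exact: step_conserved.
have [Gj oj] : inG j /\ p.1.2 j = 0 by apply: fresh; rewrite in_cons jl orbT.
split=> //; rewrite (@fold_step_ob_notin p [:: x]) // inE.
by apply: contraNneq xl => <-.
Qed.

Definition rem_oblig (st : (A -> R) * (nat -> R)) (a : A) : R :=
  st.1 a - Num.min (st.1 a) (Bal a).

(* Processing a vertex is running the edge loop from its remaining
   obligation; when nothing remains the loop is idle anyway. *)
Lemma processE obl o a :
  process (obl, o) a = (foldl step (obl, o, rem_oblig (obl, o) a) (out_edges a)).1.
Proof.
rewrite /process /rem_oblig /=; case: ifP => [stop|_]; first by rewrite fold_step_stopped.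
by case: foldl => [[? ?] ?].
Qed.

Lemma out_edgesP a j : (j \in out_edges a) = inG j && (src j == a).
Proof.
rewrite /out_edges mem_rev mem_filter mem_iota /= add0n.
by case Gj: (inG j); rewrite //= (inG_lt Gj) andbT.
Qed.

Lemma out_edges_uniq a : uniq (out_edges a).
Proof. by rewrite rev_uniq filter_uniq // iota_uniq. Qed.

Lemma out_edges_amt_ge0 a j : j \in out_edges a -> 0 <= amt j.
Proof. by rewrite out_edgesP => /andP[/inG_lt/amt_ge0]. Qed.

Lemma inG_later t j : inG t -> (t < j < n)%N -> src j = src t -> inG j.
Proof.
by case/and3P=> i0t _ reach /andP[tj jn] sj; rewrite /inG (ltn_trans i0t tj) jn sj.
Qed.

Lemma out_edges_split t : inG t ->
  out_edges (src t) = rev [seq j <- after t | src j == src t]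
                      ++ t :: rev [seq j <- iota 0 t | inG j && (src j == src t)].
Proof.
move=> Gt; have tn := inG_lt Gt.
rewrite /out_edges (iota_around tn) filter_cat /= Gt eqxx.
rewrite rev_cat rev_cons cat_rcons; congr (rev _ ++ _); apply: eq_in_filter => j.
rewrite mem_iota subnKC // => jt; case: eqP => [sj|]; last by rewrite andbF.
by rewrite (inG_later Gt jt sj).
Qed.

Lemma process_ob_notin st a j : src j != a -> (process st a).2 j = st.2 j.
Proof.
case: st => obl o ja; rewrite processE fold_step_ob_notin //.
by rewrite out_edgesP (negbTE ja) andbF.
Qed.

Lemma process_range st a : ob_range st.2 -> ob_range (process st a).2.
Proof.
case: st => obl o range; rewrite processE.
by apply: fold_step_range => // j /out_edges_amt_ge0.
Qed.

Lemma process_conserved st a : (forall j, j \in out_edges a -> st.2 j = 0) ->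
  conserved st -> conserved (process st a).
Proof.
case: st => obl o fresh cons; rewrite processE.
apply: fold_step_conserved => //; first exact: out_edges_uniq.
by move=> j ja; split; [move: ja; rewrite out_edgesP => /andP[] | exact: fresh].
Qed.

Lemma process_ob_le st t : inG t -> st.2 t = 0 ->
  (process st (src t)).2 t
  <= Num.max 0 (rem_oblig st (src t) - \sum_(j <- after t | src j == src t) amt j).
Proof.
case: st => obl o Gt ot; simpl in ot.
rewrite processE (out_edges_split Gt) foldl_cat /= fold_step_ob_notin; last first.
  by rewrite mem_rev mem_filter mem_iota add0n ltnn !andbF.
apply: le_trans (step_ob_le _) _.
  rewrite fold_step_ob_notin //=.
  by rewrite mem_rev mem_filter mem_iota ltnn andbF.
apply: le_trans; first apply: fold_step_rem_le.
  move=> j; rewrite mem_rev mem_filter mem_iota subnKC ?(inG_lt Gt) //.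
  by move=> /and3P[_ _ /amt_ge0].
by rewrite /= big_rev big_filter.
Qed.

Lemma foldl_process_ob_notin st L j : src j \notin L ->
  (foldl process st L).2 j = st.2 j.
Proof.
elim: L st => [|x L IH] st //=; rewrite in_cons negb_or => /andP[jx jL].
by rewrite IH // process_ob_notin.
Qed.

Lemma foldl_process_range st L : ob_range st.2 -> ob_range (foldl process st L).2.
Proof. by elim: L st => [|x L IH] st //= range; apply/IH/process_range. Qed.

Lemma foldl_process_conserved st L : uniq L ->
  (forall j, inG j -> src j \in L -> st.2 j = 0) -> conserved st ->
  conserved (foldl process st L).
Proof.
elim: L st => [|x L IH] st //= /andP[xL uL] fresh cons; apply: IH => //.
  move=> j Gj jL; rewrite process_ob_notin; first by apply: fresh; rewrite // in_cons jL orbT.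
  by apply: contraNneq xL => <-.
apply: process_conserved => // j; rewrite out_edgesP => /andP[Gj /eqP sj].
by apply: fresh; rewrite // sj mem_head.
Qed.

Lemma process_ob_le_obsum st t : inG t -> st.2 t = 0 -> ob_range st.2 ->
  conserved st ->
  (process st (src t)).2 t <= (if src t == a0 then s else 0)
    + \sum_(j <- iota 0 n | [&& inG j, dst j == src t & (j < t)%N]) st.2 j.
Proof.
move=> Gt ot range cons; set a := src t.
have tn := inG_lt Gt.
set I := if a == a0 then s else 0.
have I0 : 0 <= I.
  by rewrite /I; case: ifP => // _; apply: amt_ge0; case/andP: Gt => /ltn_trans->.
set before := \sum_(j <- iota 0 n | _) st.2 j.
have before0 : 0 <= before by apply: sumr_ge0 => j _; case/andP: (range j).
set later := \sum_(j <- after t | inG j && (dst j == a)) st.2 j.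
have obl_a : st.1 a = I + before + later.
  rewrite cons (sum_around _ _ tn) ot if_same addr0 addrA.
  by congr (_ + _ + _); apply: eq_bigl => j; rewrite andbA.
have later_le : later <= \sum_(j <- after t | dst j == a) amt j.
  rewrite /later big_mkcond [leRHS]big_mkcond !big_seq; apply: ler_sum => j.
  rewrite mem_iota subnKC // => /andP[_ jn]; have amt0 := amt_ge0 jn.
  case: (dst j == a); rewrite ?andbT //; case: (inG j) => //.
  by case/andP: (range j); rewrite (max_idPr amt0).
have flow := late_inflow_le a tn.
have out0 : 0 <= \sum_(j <- after t | src j == a) amt j.
  rewrite big_seq_cond; apply: sumr_ge0 => j /andP[]; rewrite mem_iota subnKC //.
  by case/andP=> _ /amt_ge0.
apply: le_trans (process_ob_le Gt ot) _; rewrite /rem_oblig -/a.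
by case: (lerP (st.1 a) (Bal a)) => cmp; rewrite ge_max; apply/andP; split; lra.
Qed.

Lemma in_edge_src_before L1 L2 a j : uniq (L1 ++ a :: L2) ->
  (forall i, inG i -> (index (src i) (L1 ++ a :: L2) < index (dst i) (L1 ++ a :: L2))%N) ->
  inG j -> dst j = a -> src j \notin a :: L2.
Proof.
rewrite cat_uniq => /and3P[_ disj _] topo Gj dj.
have aL1 : a \notin L1 by apply: contra disj => aL1; rewrite /= aL1.
have := topo j Gj; rewrite dj !index_cat (negbTE aL1) /= eqxx addn0.
case: ifP => [jL1 _|_]; last by rewrite ltnNge leq_addr.
by apply: contra disj => jaL2; apply/hasP; exists (src j).
Qed.

Definition init_state : (A -> R) * (nat -> R) :=
  ((fun y => if y == a0 then s else 0), (fun _ => 0)).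

Lemma init_conserved : conserved init_state.
Proof. by move=> v /=; rewrite big1 ?addr0. Qed.

Lemma init_range : ob_range init_state.2.
Proof. by move=> j /=; rewrite lexx le_max lexx. Qed.

End CalcFreezeObligations.

Theorem theoremA2 (A : finType) (R : realFieldType) (h : history A R)
    (i0 : nat) (L : seq A) :
  (i0 < n_tx h)%N ->
  valid_history h ->
  G_acyclic h i0 ->
  topo_order h i0 L ->
  forall t, inG h i0 t ->
    ob_final h i0 L t <= obsum h i0 (ob_final h i0 L) t.
Proof.
move=> _ valid _ [uL memL topo] t Gt.
have aL : src h t \in L.
  rewrite memL /isVertex; apply/orP; right; apply/hasP; exists t; last by rewrite Gt eqxx.
  by rewrite mem_iota add0n (inG_lt Gt).
case/splitPr: aL uL topo => L1 L2 uL topo.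
have aL1 : src h t \notin L1.
  by move: (uL); rewrite cat_uniq => /and3P[_ /hasPn/(_ _ (mem_head _ _))].
have aL2 : src h t \notin L2 by move: (uL); rewrite cat_uniq /= => /and4P[_ _ ? _].
rewrite /ob_final /calc_freeze -/(init_state h i0) foldl_cat /= /obsum.
set st1 := foldl _ (init_state h i0) L1.
rewrite foldl_process_ob_notin //.
rewrite (eq_bigr (fun j => st1.2 j)); last first.
  move=> j /and3P[Gj /eqP dj _].
  have := in_edge_src_before uL topo Gj dj; rewrite in_cons negb_or => /andP[ja jL2].
  by rewrite foldl_process_ob_notin // process_ob_notin.
apply: (process_ob_le_obsum valid) => //.
- by rewrite /st1 foldl_process_ob_notin.
- by apply: foldl_process_range; [exact: valid | exact: init_range].
apply: foldl_process_conserved; last exact: init_conserved.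
  by move: uL; rewrite cat_uniq => /and3P[].
by move=> j _ _.
Qed.
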